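(* Let $\alpha,\beta$ be $H$-colorings of $G$, $q\in V(G)$, and let $Q\in\pi(H)$ be realizable for $\alpha,\beta,q$. Let $C$ be an $\alpha$-tight closed walk in $G$. Then for every vertex $v$ on $C$ and every walk $W$ in $G$ from $v$ to $q$, $Q=\overline{\alpha(W)}^{-1}\cdot\overline{\beta(W)}$.
   Context: All graphs are finite and undirected. $G$ is a connected loopless graph with at least one edge. $H$ is a connected graph with at least one edge, possibly with loops, having the monochromatic neighborhood property: for all $a,b\in V(H)$, $|N_H(a)\cap N_H(b)|\le 1$, where $N_H(a)=\{w: aw\in E(H)\}$. An $H$-coloring of $G$ is a map $\sigma:V(G)\to V(H)$ such that $uv\in E(G)$ implies $\sigma(u)\sigma(v)\in E(H)$. An $H$-recoloring sequence is a sequence $\sigma_0,\dots,\sigma_l$ of $H$-colorings of $G$ in which consecutive colorings differ in the color of exactly one vertex. Walks: an oriented edge is an ordered pair $(x,y)$ with $xy$ an edge; $(x,y)^{-1}=(y,x)$. A walk from $x$ to $y$ is a sequence of oriented edges, consecutive ones sharing endpoints, starting at $x$ and ending at $y$; $\varepsilon$ is the empty walk; $W^{-1}$ the reversed walk. A walk is reduced if no two consecutive edges $e_ie_{i+1}$ satisfy $e_{i+1}=e_i^{-1}$; $\overline{W}$ is the unique reduced walk obtained by repeatedly deleting such pairs. $A\cdot B:=\overline{AB}$ for reduced $A,B$ with $B$ starting where $A$ ends. $\pi(H)$ is the set of reduced walks in $H$. For a walk $W=(x_0,x_1)\dots(x_{k-1},x_k)$ in $G$, $\alpha(W)=(\alpha(x_0),\alpha(x_1))\dots(\alpha(x_{k-1}),\alpha(x_k))$.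 A nonempty closed walk $e_1\dots e_k$ is cyclically reduced if it is reduced and $e_k\ne e_1^{-1}$; a closed walk $C$ in $G$ is $\alpha$-tight if $\alpha(C)$ is cyclically reduced. Vertex walks: in a one-step sequence $\sigma_0,\sigma_1$ where vertex $w$ changes from $a$ to $b\ne a$, all neighbors of $w$ have a common color $h$ (the unique element of $N_H(a)\cap N_H(b)$); set $S(w)=(a,h)(h,b)$ and $S(v)=\varepsilon$ for $v\ne w$. For the empty sequence $S(v)=\varepsilon$; for longer sequences $S(v)$ is the concatenation of the one-step walks in order. $Q\in\pi(H)$ is realizable for $\alpha,\beta,q$ if there is an $H$-recoloring sequence $S=\sigma_0,\dots,\sigma_l$ with $\sigma_0=\alpha$, $\sigma_l=\beta$, $\overline{S(q)}=Q$. *)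

From mathcomp Require Import all_boot.
Set Implicit Arguments. Unset Strict Implicit. Unset Printing Implicit Defensive.

(* Graphs: a finite type of vertices with a symmetric edge relation.
   Walks are sequences of oriented edges (ordered pairs). *)

Section Walks.
Variable T : eqType.

Definition einv (e : T * T) : T * T := (e.2, e.1).

Definition winv (W : seq (T * T)) : seq (T * T) := rev (map einv W).

Fixpoint is_walk (e : rel T) (x : T) (W : seq (T * T)) (y : T) : bool :=
  match W with
  | [::] => x == y
  | p :: W' => [&& p.1 == x, e p.1 p.2 & is_walk e p.2 W' y]
  end.

Fixpoint reduced (W : seq (T * T)) : bool :=
  match W with
  | e1 :: ((e2 :: _) as W') => (e2 != einv e1) && reduced W'
  | _ => true
  end.

(* \overline{W}: the reduced walk obtained by cancelling backtracks *)
Fixpoint red (W : seq (T * T)) : seq (T * T) :=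
  match W with
  | [::] => [::]
  | p :: W' =>
      match red W' with
      | q :: R => if q == einv p then R else p :: q :: R
      | [::] => [:: p]
      end
  end.

Definition wdot (A B : seq (T * T)) : seq (T * T) := red (A ++ B).

Definition cyc_reduced (W : seq (T * T)) : bool :=
  match W with
  | [::] => false
  | p :: W' => reduced W && (last p W' != einv p)
  end.

End Walks.

Definition wmap (U V : Type) (f : U -> V) (W : seq (U * U)) : seq (V * V) :=
  map (fun p => (f p.1, f p.2)) W.

Section Colorings.
Variables (VG VH : finType) (eG : rel VG) (eH : rel VH).

Definition simple_graph : Prop := symmetric eG /\ irreflexive eG.
Definition connected_graph (V : finType) (e : rel V) : Prop :=
  forall x y, connect e x y.
Definition has_edge (V : finType) (e : rel V) : Prop := exists x y, e x y.

Definition mono_nbhd : Prop :=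
  forall a b : VH, a != b -> #|[pred w | eH a w && eH b w]| <= 1.

Definition is_Hcoloring (s : VG -> VH) : Prop :=
  forall u v, eG u v -> eH (s u) (s v).

Definition one_step (s0 s1 : VG -> VH) : Prop :=
  exists w, s0 w != s1 w /\ forall v, v != w -> s0 v = s1 v.

Fixpoint recoloring_seq (s0 : VG -> VH) (rest : seq (VG -> VH)) : Prop :=
  match rest with
  | [::] => is_Hcoloring s0
  | s1 :: rest' => is_Hcoloring s0 /\ one_step s0 s1 /\ recoloring_seq s1 rest'
  end.

(* one-step vertex walk: (a,h)(h,b) where h is the (unique) element of
   N_H(a) \cap N_H(b) if v changes from a to b, else the empty walk *)
Definition step_walk (s0 s1 : VG -> VH) (v : VG) : seq (VH * VH) :=
  if s0 v == s1 v then [::]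
  else let h := odflt (s0 v) [pick h | eH (s0 v) h && eH (s1 v) h] in
       [:: (s0 v, h); (h, s1 v)].

Fixpoint vertex_walk (s0 : VG -> VH) (rest : seq (VG -> VH)) (v : VG)
  : seq (VH * VH) :=
  match rest with
  | [::] => [::]
  | s1 :: rest' => step_walk s0 s1 v ++ vertex_walk s1 rest' v
  end.

Definition realizable (Q : seq (VH * VH)) (alpha beta : VG -> VH) (q : VG)
  : Prop :=
  exists rest : seq (VG -> VH),
    [/\ recoloring_seq alpha rest,
        (forall v, last alpha rest v = beta v) &
        red (vertex_walk alpha rest q) = Q].

Definition tight (alpha : VG -> VH) (C : seq (VG * VG)) : bool :=
  cyc_reduced (wmap alpha C).

End Colorings.

Definition in_pi (V : finType) (e : rel V) (Q : seq (V * V)) : Prop :=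
  reduced Q /\ exists x y, is_walk e x Q y.

From mathcomp Require Import all_boot.
Set Implicit Arguments. Unset Strict Implicit. Unset Printing Implicit Defensive.

(* Reduced walks form the free groupoid on the oriented edges, and the vertex
   walks of a recoloring sequence are a homotopy: for every walk W from x to
   y in G, alpha(W) S(y) reduces like S(x) beta(W), because a recolored
   vertex w changes from a to b through the unique common neighbour h of a
   and b, which is the colour of every neighbour of w.  For the same reason a
   vertex on an alpha-tight closed walk is never recolored: its two
   neighbours along the walk receive distinct colours, so no single
   recoloring can touch the walk, which stays tight.  Hence S(v) is empty,
   and for W from v to q this gives
   Q = red (S(q)) = red (alpha(W)^-1 S(v) beta(W)) = red (alpha(W)^-1 beta(W)). *)

Section Reduction.
Variable T : eqType.
Implicit Types (p : T * T) (A B R W : seq (T * T)).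

Definition cons_red p R :=
  match R with
  | q :: R' => if q == einv p then R' else p :: q :: R'
  | [::] => [:: p]
  end.

Lemma red_cons p W : red (p :: W) = cons_red p (red W).
Proof. by []. Qed.

Lemma einvK : involutive (@einv T).
Proof. by case. Qed.

Lemma reduced_behead p R : reduced (p :: R) -> reduced R.
Proof. by case: R => //= q R /andP[]. Qed.

Lemma reduced_cons_red p R : reduced R -> reduced (cons_red p R).
Proof.
case: R => [|q R] //= redR; case: ifP => [_|qNp]; first exact: reduced_behead redR.
by rewrite /= qNp redR.
Qed.

Lemma reduced_red W : reduced (red W).
Proof. by elim: W => //= p W; apply: reduced_cons_red. Qed.

Lemma red_reduced R : reduced R -> red R = R.
Proof.
elim: R => // p R IH redpR; rewrite red_cons IH ?(reduced_behead redpR) //.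
by case: R redpR {IH} => //= q R /andP[/negbTE->].
Qed.

Lemma red_idem W : red (red W) = red W.
Proof. exact/red_reduced/reduced_red. Qed.

Lemma red_backtrack p B : red (p :: einv p :: B) = red B.
Proof.
rewrite !red_cons; have := reduced_red B; case: (red B) => [|q R] /=.
  by rewrite eqxx.
rewrite einvK; case: eqP => [->|_] redqR; last by rewrite /= eqxx.
by case: R redqR => //= r R /andP[/negbTE->].
Qed.

Lemma red_cat_redr A B : red (A ++ B) = red (A ++ red B).
Proof. by elim: A => [|p A /= ->]; rewrite ?red_idem. Qed.

Lemma red_cat_redl A B : red (A ++ B) = red (red A ++ B).
Proof.
elim: A => // p A IH; rewrite cat_cons red_cons IH (red_cons p A).
case: (red A) => [|q R] //; rewrite {2}/cons_red; case: ifP => [/eqP->|_] //.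
by rewrite -red_cons red_backtrack.
Qed.

Lemma red_congr_cat A A' B B' :
  red A = red A' -> red B = red B' -> red (A ++ B) = red (A' ++ B').
Proof.
move=> eqA eqB; rewrite red_cat_redl red_cat_redr eqA eqB.
by rewrite -red_cat_redr -red_cat_redl.
Qed.

Lemma red_backtrack_mid A p B : red (A ++ p :: einv p :: B) = red (A ++ B).
Proof. by apply: red_congr_cat => //; apply: red_backtrack. Qed.

Lemma winv_cons p A : winv (p :: A) = rcons (winv A) (einv p).
Proof. by rewrite /winv /= rev_cons. Qed.

Lemma winvK : involutive (@winv T).
Proof. by move=> A; rewrite /winv map_rev revK -map_comp (eq_map einvK) map_id. Qed.

Lemma red_cat_winv A : red (A ++ winv A) = [::].
Proof.
elim: A => // p A IH.
by rewrite winv_cons -cats1 cat_cons catA red_cons red_cat_redl IH /= eqxx.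
Qed.

Lemma red_winv_cat A : red (winv A ++ A) = [::].
Proof. by rewrite -{2}(winvK A) red_cat_winv. Qed.

Lemma red_winv_cat_cancel A B : red (winv A ++ (A ++ B)) = red B.
Proof. by rewrite catA red_cat_redl red_winv_cat. Qed.

Lemma red_winv_red A : red (winv (red A)) = red (winv A).
Proof.
rewrite -[RHS](red_winv_cat_cancel (red A)) red_cat_redr -red_cat_redl.
by rewrite red_cat_winv cats0.
Qed.

Lemma wdot_winv_red A B : wdot (winv (red A)) (red B) = red (winv A ++ B).
Proof. by rewrite /wdot -red_cat_redr red_cat_redl red_winv_red -red_cat_redl. Qed.

Lemma cyc_reduced_reduced W : cyc_reduced W -> reduced W.
Proof. by case: W => // p W /andP[]. Qed.

Lemma cyc_reduced_last p W : cyc_reduced (p :: W) -> last p W != einv p.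
Proof. by case/andP. Qed.

Lemma reduced_cat_consec X p r Y : reduced (X ++ r :: p :: Y) -> p != einv r.
Proof.
elim: X => [/andP[]//|x X IH] /=.
by case: X IH => [|y X] IH /andP[_ /IH].
Qed.

End Reduction.

Section Walks.
Variables (V : finType) (e : rel V).

Lemma is_walk_edge x C y p : is_walk e x C y -> p \in C -> e p.1 p.2.
Proof.
elim: C x => // q C IH x /= /and3P[_ eq walkC].
by rewrite inE => /orP[/eqP->//|]; apply: IH walkC.
Qed.

Lemma is_walk_head x p C y : is_walk e x (p :: C) y -> p.1 = x.
Proof. by case/and3P=> /eqP. Qed.

Lemma is_walk_last x p C y : is_walk e x (p :: C) y -> (last p C).2 = y.
Proof.
elim: C x p => [|q C IH] x p /= /and3P[_ _]; first by move/eqP.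
exact: IH.
Qed.

Lemma is_walk_consec x X r p Y y : is_walk e x (X ++ r :: p :: Y) y -> p.1 = r.2.
Proof.
elim: X x => [|q X IH] x /= /and3P[_ _]; last exact: IH.
exact: is_walk_head.
Qed.

Lemma is_walk_sources x C y :
  is_walk e x C y -> rcons [seq p.1 | p <- C] y = x :: [seq p.2 | p <- C].
Proof.
elim: C x => [|p C IH] x /=; first by move/eqP->.
by case/and3P=> /eqP-> _ /IH->.
Qed.

Lemma closed_walk_target c C p :
  is_walk e c C c -> p \in C -> p.2 \in [seq r.1 | r <- C].
Proof.
move=> walkC pC; have : p.2 \in rcons [seq r.1 | r <- C] c.
  by rewrite (is_walk_sources walkC) inE (map_f (fun r => r.2)) ?orbT.
rewrite mem_rcons inE => /orP[/eqP->|//].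
by case: C walkC pC => //= r C /is_walk_head<- _; apply: mem_head.
Qed.

End Walks.

Section Recoloring.
Variables (VG VH : finType) (eG : rel VG) (eH : rel VH).
Hypotheses (eG_irr : irreflexive eG) (eH_sym : symmetric eH) (eH_mono : mono_nbhd eH).

Lemma common_nbr_uniq a b h h' :
  a != b -> eH a h -> eH b h -> eH a h' -> eH b h' -> h = h'.
Proof.
move=> neqab ah bh ah' bh'; move/card_le1_eqP: (eH_mono neqab).
by move/(_ h h'); rewrite !inE /= ah bh ah' bh' => /(_ isT isT).
Qed.

Lemma tight_consec_colors (s : VG -> VH) c C w :
  is_walk eG c C c -> tight s C -> w \in [seq p.1 | p <- C] ->
  exists r p, [/\ r \in C, p \in C, r.2 = w, p.1 = w & s r.1 != s p.2].
Proof.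
move=> walkC tightC /mapP[p pC ->]; move: (pC).
case/splitPr: pC walkC tightC => X Y; case/lastP: X => [|X r] /= walkC tightC.
  have pE := is_walk_head walkC; have lastE := is_walk_last walkC.
  exists (last p Y), p; split; rewrite ?mem_last ?mem_head ?lastE //.
  move/cyc_reduced_last: tightC; rewrite /wmap (last_map (fun r => (s r.1, s r.2))).
  by apply: contra => /eqP->; rewrite pE lastE.
rewrite cat_rcons in walkC tightC; have rpE := is_walk_consec walkC.
exists r, p; split; rewrite ?mem_cat ?mem_rcons ?mem_head ?orbT -?rpE //.
move/cyc_reduced_reduced: tightC; rewrite /wmap map_cat /= => /reduced_cat_consec.
by apply: contra => /eqP->; rewrite rpE.
Qed.

Section OneStep.
Variables (s0 s1 : VG -> VH) (w : VG).
Hypotheses (s0_col : is_Hcoloring eG eH s0) (s1_col : is_Hcoloring eG eH s1).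
Hypotheses (w_recol : s0 w != s1 w) (s01_eq : forall v, v != w -> s0 v = s1 v).

Lemma recolor_nbr x :
  eG x w \/ eG w x -> eH (s0 w) (s0 x) /\ eH (s1 w) (s0 x).
Proof.
move=> xw; have x_ne_w : x != w.
  by apply: contraPneq xw => ->; rewrite eG_irr; case.
have col_wx s : is_Hcoloring eG eH s -> eH (s w) (s x).
  by move=> s_col; case: xw => /s_col //; rewrite eH_sym.
by split; [|rewrite (s01_eq x_ne_w)]; apply: col_wx.
Qed.

Lemma recolor_nbrs_same_color x y :
  eG x w \/ eG w x -> eG y w \/ eG w y -> s0 x = s0 y.
Proof.
move=> /recolor_nbr[wx0 wx1] /recolor_nbr[wy0 wy1].
exact: common_nbr_uniq w_recol wx0 wx1 wy0 wy1.
Qed.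

Lemma step_walk_nbr x :
  eG x w \/ eG w x -> step_walk eH s0 s1 w = [:: (s0 w, s0 x); (s0 x, s1 w)].
Proof.
move=> /recolor_nbr[wx0 wx1]; rewrite /step_walk (negbTE w_recol).
case: pickP => [h /andP[wh0 wh1] | /(_ (s0 x))]; last by rewrite wx0 wx1.
by rewrite (common_nbr_uniq w_recol wh0 wh1 wx0 wx1).
Qed.

Lemma step_walk_other v : v != w -> step_walk eH s0 s1 v = [::].
Proof. by move=> v_ne_w; rewrite /step_walk s01_eq ?eqxx. Qed.

Lemma step_walk_homotopy W x y : is_walk eG x W y ->
  red (wmap s0 W ++ step_walk eH s0 s1 y) = red (step_walk eH s0 s1 x ++ wmap s1 W).
Proof.
elim: W x => [|[x' z] W IH] x; first by move/eqP->; rewrite cats0.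
case/and3P=> /eqP Ex' exz walkW; rewrite /= in Ex' exz walkW; subst x'.
have walkE := IH _ walkW.
have wmap_cons s : wmap s ((x, z) :: W) = [:: (s x, s z)] ++ wmap s W by [].
rewrite !wmap_cons -catA (red_congr_cat (erefl (red [:: _])) walkE) !catA.
apply: red_congr_cat => //.
case: (eqVneq x w) => [x_eq_w|x_ne_w]; case: (eqVneq z w) => [z_eq_w|z_ne_w].
- by move: exz; rewrite x_eq_w z_eq_w eG_irr.
- subst x; rewrite (step_walk_other z_ne_w) -(s01_eq z_ne_w).
  rewrite (step_walk_nbr (or_intror exz)).
  exact: esym (red_backtrack_mid [:: (s0 w, s0 z)] (s0 z, s1 w) [::]).
- rewrite z_eq_w (step_walk_other x_ne_w) -(s01_eq x_ne_w) in exz *.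
  by rewrite (step_walk_nbr (or_introl exz)) red_backtrack.
- by rewrite (step_walk_other x_ne_w) (step_walk_other z_ne_w) -!s01_eq.
Qed.

Lemma recolored_not_on_tight c C :
  is_walk eG c C c -> tight s0 C -> w \notin [seq p.1 | p <- C].
Proof.
move=> walkC tightC; apply/negP => /(tight_consec_colors walkC tightC).
case=> r [p [rC pC r2w p1w]]; apply/negP; rewrite negbK; apply/eqP.
apply: recolor_nbrs_same_color; [left; rewrite -r2w | right; rewrite -p1w];
  exact: is_walk_edge walkC _.
Qed.

Lemma tight_one_step c C : is_walk eG c C c -> tight s0 C -> tight s1 C.
Proof.
move=> walkC tightC; have w_off := recolored_not_on_tight walkC tightC.
have src_ne_w v : v \in [seq p.1 | p <- C] -> v != w by apply: contraTneq => ->.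
rewrite /tight (_ : wmap s1 C = wmap s0 C) //.
apply/eq_in_map => p pC.
by rewrite !s01_eq // src_ne_w ?(closed_walk_target walkC) ?map_f.
Qed.

End OneStep.

Lemma recoloring_seq_col s rest :
  recoloring_seq eG eH s rest -> is_Hcoloring eG eH s.
Proof. by case: rest => [|s1 rest] //= []. Qed.

Lemma vertex_walk_homotopy s rest W x y :
  recoloring_seq eG eH s rest -> is_walk eG x W y ->
  red (wmap s W ++ vertex_walk eH s rest y) =
  red (vertex_walk eH s rest x ++ wmap (last s rest) W).
Proof.
move=> + walkW; elim: rest s => [|s1 rest IH] s /=; first by rewrite cats0.
case=> s_col [[w [w_recol s01_eq]] rec1].
have s1_col := recoloring_seq_col rec1.
have step := step_walk_homotopy s_col s1_col w_recol s01_eq walkW.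
rewrite catA (red_congr_cat step (erefl (red _))) -!catA.
by apply: red_congr_cat => //; apply: IH.
Qed.

Lemma vertex_walk_tight s rest c C v :
  recoloring_seq eG eH s rest -> is_walk eG c C c -> tight s C ->
  v \in [seq p.1 | p <- C] -> vertex_walk eH s rest v = [::].
Proof.
move=> + walkC; elim: rest s => [|s1 rest IH] s //=.
case=> s_col [[w [w_recol s01_eq]] rec1] tightC vC.
have s1_col := recoloring_seq_col rec1.
have w_off := recolored_not_on_tight s_col s1_col w_recol s01_eq walkC tightC.
have tight1 := tight_one_step s_col s1_col w_recol s01_eq walkC tightC.
have v_ne_w : v != w by apply: contraTneq vC => ->.
by rewrite (step_walk_other s01_eq v_ne_w) IH.
Qed.

End Recoloring.

Theorem mainTheorem5 (VG VH : finType) (eG : rel VG) (eH : rel VH)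
  (HGs : simple_graph eG) (HGc : connected_graph eG) (HGe : has_edge eG)
  (HHs : symmetric eH) (HHc : connected_graph eH) (HHe : has_edge eH)
  (HHm : mono_nbhd eH)
  (alpha beta : VG -> VH)
  (Ha : is_Hcoloring eG eH alpha) (Hb : is_Hcoloring eG eH beta)
  (q : VG) (Q : seq (VH * VH))
  (HQ : in_pi eH Q)
  (Hreal : realizable eG eH Q alpha beta q)
  (c : VG) (C : seq (VG * VG))
  (HC : is_walk eG c C c) (Htight : tight alpha C) :
  forall v, v \in [seq p.1 | p <- C] ->
  forall W : seq (VG * VG), is_walk eG v W q ->
    Q = wdot (winv (red (wmap alpha W))) (red (wmap beta W)).
Proof.
move=> v vC W walkW; case: HGs => _ eG_irr.
case: Hreal => rest [rec lastE <-].
have homot := vertex_walk_homotopy eG_irr HHs HHm rec walkW.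
rewrite (vertex_walk_tight eG_irr HHs HHm rec HC Htight vC) /= in homot.
have -> : wmap beta W = wmap (last alpha rest) W.
  by apply/eq_map => p; rewrite !lastE.
rewrite wdot_winv_red -(red_winv_cat_cancel (wmap alpha W)).
exact: red_congr_cat.
Qed.
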